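(* Let $\Gamma$ be a simple connected graph of order $n$ and let $\mu$ be the algebraic connectivity of $\Gamma$. Then: (1) if $\Gamma$ is 3-regular, then $\mathrm{girth}(\Gamma)\ge \left\lceil\frac{n(\mu-1)}{\mu}\right\rceil$; (2) if $\Gamma$ is 4-regular, then $\mathrm{girth}(\Gamma)\ge \left\lceil\frac{n(\mu-2)}{\mu}\right\rceil$; (3) if $\Gamma$ is 5-regular, then $\mathrm{girth}(\Gamma)\ge \left\lceil\frac{n\mu}{n+\mu}\right\rceil$.
   Context: $\mathrm{girth}(\Gamma)$ is the length of a shortest cycle in $\Gamma$. The algebraic connectivity is the second smallest eigenvalue of the Laplacian matrix of $\Gamma$. *)

From mathcomp Require Import all_boot all_order all_algebra.
From mathcomp Require Import reals.
Set Implicit Arguments. Unset Strict Implicit. Unset Printing Implicit Defensive.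
Import Order.TTheory GRing.Theory Num.Theory.
Local Open Scope ring_scope.

Definition simple_graph (n : nat) (e : rel 'I_n) : Prop :=
  symmetric e /\ irreflexive e.

Definition connected_graph (n : nat) (e : rel 'I_n) : Prop :=
  forall x y : 'I_n, connect e x y.

Definition deg (n : nat) (e : rel 'I_n) (x : 'I_n) : nat := #|[set y | e x y]|.

Definition regular (n : nat) (e : rel 'I_n) (k : nat) : Prop :=
  forall x : 'I_n, deg e x = k.

Definition has_cycle_of_length (n : nat) (e : rel 'I_n) (k : nat) : bool :=
  (3 <= k)%N && [exists t : k.-tuple 'I_n, uniq t && cycle e t].

(* Girth: length of a shortest cycle (cycles have length <= n);
   convention 0 if the graph has no cycle (never happens for the graphs below). *)
Definition girth (n : nat) (e : rel 'I_n) : nat :=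
  head 0%N [seq k <- iota 0 n.+1 | has_cycle_of_length e k].

Definition laplacian (R : ringType) (n : nat) (e : rel 'I_n) : 'M[R]_n :=
  \matrix_(i, j) (if i == j then (deg e i)%:R else if e i j then -1 else 0).

(* mu is the second smallest eigenvalue (with multiplicity) of the Laplacian:
   the characteristic polynomial factors as prod (X - s_i) with s sorted
   increasingly, and mu = s_1. *)
Definition algebraic_connectivity (R : realType) (n : nat) (e : rel 'I_n)
  (mu : R) : Prop :=
  exists s : seq R,
    [/\ size s = n, sorted <=%R s,
        char_poly (laplacian R e) = \prod_(x <- s) ('X - x%:P)
      & mu = nth 0 s 1].

(* Let C be a shortest cycle of the d-regular graph, g = |C| its girth and
   chi its indicator vector. The vector x = n chi - g is orthogonal to the
   all-ones vector, which lies in the kernel of the Laplacian L, so the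
   Courant-Fischer principle gives mu |x|^2 <= x L x^T. Here |x|^2 = g n (n - g),
   while x L x^T = n^2 e(C, V - C) <= n^2 g (d - 2) because every vertex of C
   has at least two neighbours on C. Hence mu (n - g) <= (d - 2) n, which for
   d = 3, 4, 5 rearranges to the three bounds. The min-max step uses the
   spectral theorem over R[i]: all eigenvalues but one are >= mu, and a
   nonzero combination of 1 and x avoids the eigenvector of that one. *)

From mathcomp Require Import all_boot all_order all_algebra.
From mathcomp Require Import reals.
From mathcomp Require Import sesquilinear spectral.
From mathcomp.real_closed Require Import complex.
From mathcomp Require Import ring lra zify.
Set Implicit Arguments. Unset Strict Implicit. Unset Printing Implicit Defensive.
Import Order.TTheory GRing.Theory Num.Theory.
Local Open Scope ring_scope.
Local Open Scope sesquilinear_scope.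

Lemma char_poly_similar (F : fieldType) n (P M : 'M[F]_n) :
  P \in unitmx -> char_poly (invmx P *m M *m P) = char_poly M.
Proof.
move=> Pu; rewrite /char_poly /char_poly_mx.
have PVP : map_mx (@polyC F) (invmx P) *m map_mx polyC P = 1%:M.
  by rewrite -map_mxM mulVmx // map_mx1.
have -> : 'X%:M - map_mx polyC (invmx P *m M *m P) =
    map_mx polyC (invmx P) *m ('X%:M - map_mx polyC M) *m map_mx polyC P.
  by rewrite mulmxBr mulmxBl !map_mxM mul_mx_scalar -scalemxAl PVP scalemx1.
rewrite !det_mulmx mulrC mulrA -det_mulmx -map_mxM mulmxV // map_mx1 det1.
by rewrite mul1r.
Qed.

Lemma card_count_enum (T : finType) (p : pred T) : #|p| = count p (enum T).
Proof. by rewrite cardE -size_filter /enum_mem /= filter_predT. Qed.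

Lemma sorted_count_lt_nth1 (R : realDomainType) (s : seq R) :
  sorted <=%R s -> (count (fun x => x < nth 0 s 1)%R s <= 1)%N.
Proof.
case: s => [|s0 [|s1 r]] //=; first by case: (s0 < 0).
move=> /andP[_ /(order_path_min le_trans)/allP s1_min].
rewrite ltxx add0n.
have -> : count (fun x : R => x < s1) r = 0%N.
  apply/eqP; rewrite -leqn0 leqNgt -has_count.
  by apply/hasPn => x /s1_min; rewrite -leNgt.
by rewrite addn0; case: (s0 < s1).
Qed.

Lemma sumr_bool_card (R : pzSemiRingType) (T : finType) (P : pred T) :
  \sum_j ((P j)%:R : R) = (#|[set j | P j]|)%:R.
Proof.
rewrite -sum1dep_card natr_sum [RHS]big_mkcond; apply: eq_bigr => j _.
by case: (P j).
Qed.

Lemma sumr_mem_uniq (R : pzSemiRingType) (T : finType) (t : seq T) :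
  uniq t -> \sum_i ((i \in t)%:R : R) = (size t)%:R.
Proof. by move=> t_uniq; rewrite sumr_bool_card cardsE (card_uniqP t_uniq). Qed.

Section Spectral.
Variables (C : numClosedFieldType) (n : nat).

Lemma rayleigh_unitary_diag (P : 'M[C]_n) (D y : 'rV[C]_n) (m : C) :
  P^t* *m P = 1%:M -> (forall i, ((y *m P^t*) 0 i == 0) || (m <= D 0 i)) ->
  m * (y *m y^t*) 0 0 <= (y *m (P^t* *m diag_mx D *m P) *m y^t*) 0 0.
Proof.
move=> unitP.
have yP : P *m y^t* = (y *m P^t*)^t* by rewrite trmx_mul map_mxM trmxCK.
have -> : y *m y^t* = (y *m P^t*) *m (y *m P^t*)^t*.
  by rewrite -yP mulmxA -(mulmxA y) unitP mulmx1.
have -> : y *m (P^t* *m diag_mx D *m P) *m y^t* =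
    (y *m P^t*) *m diag_mx D *m (y *m P^t*)^t* by rewrite -yP !mulmxA.
move: (y *m P^t*) => z z_ge.
rewrite mul_mx_diag !mxE mulr_sumr; apply: ler_sum => j _; rewrite !mxE.
have [->|zj_neq0] := eqVneq (z 0 j) 0; first by rewrite !mul0r mulr0.
have := z_ge j; rewrite (negPf zj_neq0) /= => m_le.
rewrite mulrA [m * _]mulrC -mulrA [D 0 j * _]mulrC mulrA mulrAC.
by rewrite ler_wpM2l // mul_conjC_ge0.
Qed.

Lemma normal_char_poly_spectral_diag (A : 'M[C]_n) (r : seq C) :
  A \is normalmx -> char_poly A = \prod_(x <- r) ('X - x%:P) ->
  perm_eq r [seq spectral_diag A 0 i | i <- enum 'I_n].
Proof.
move=> /orthomx_spectralP A_diag charA; apply: prod_XsubC_eq.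
rewrite big_map -charA [in char_poly A]A_diag char_poly_similar ?spectral_unit //.
rewrite char_poly_trig ?diag_mx_is_trig // big_enum /=.
by apply: eq_bigr => i _; rewrite mxE eqxx mulr1n.
Qed.

Lemma psd_eigenvalue_ge0 (A : 'M[C]_n) (r : C) :
  (forall y : 'rV_n, 0 <= (y *m A *m y^t*) 0 0) -> eigenvalue A r -> 0 <= r.
Proof.
move=> A_psd /eigenvalueP[v vA v_neq0].
have v_gt0 : 0 < (v *m v^t*) 0 0 by rewrite -(dotmxE v) dnorm_gt0.
by have := A_psd v; rewrite vA -scalemxAl mxE pmulr_lge0.
Qed.

Lemma trmxC_comb (a b : C) (u v : 'rV[C]_n) :
  (a *: u + b *: v)^t* = a^* *: u^t* + b^* *: v^t*.
Proof. by apply/matrixP => i j; rewrite !mxE rmorphD !rmorphM. Qed.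

Lemma dot_comb_orth (a b : C) (u v : 'rV[C]_n) : v *m u^t* = 0 ->
  ((a *: u + b *: v) *m (a *: u + b *: v)^t*) 0 0 =
    a * a^* * (u *m u^t*) 0 0 + b * b^* * (v *m v^t*) 0 0.
Proof.
move=> vu0; have uv0 : u *m v^t* = 0.
  by rewrite -[u]trmxCK -map_mxM -trmx_mul vu0 trmx0 map_mx0.
rewrite trmxC_comb !mulmxDl !mulmxDr -!scalemxAl -!scalemxAr !scalerA vu0 uv0.
by rewrite !scaler0 addr0 add0r !mxE.
Qed.

Lemma quad_comb_kernel (A : 'M[C]_n) (a b : C) (u v : 'rV[C]_n) :
  A \is hermsymmx -> u *m A = 0 ->
  ((a *: u + b *: v) *m A *m (a *: u + b *: v)^t*) 0 0 =
    b * b^* * (v *m A *m v^t*) 0 0.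
Proof.
move=> /is_hermitianmxP A_herm uA0; rewrite expr0 scale1r in A_herm.
have Au0 : A *m u^t* = 0.
  by rewrite [A]A_herm -map_mxM -trmx_mul uA0 trmx0 map_mx0.
rewrite trmxC_comb mulmxDl -!scalemxAl uA0 scaler0 add0r -scalemxAl.
rewrite mulmxDr -!scalemxAr -[v *m A *m u^t*]mulmxA Au0 mulmx0 scaler0 add0r.
by rewrite scalerA [LHS]mxE.
Qed.

End Spectral.

Section SpectralReal.
Variables (R : rcfType) (n : nat).
Local Notation C := R[i].
Local Notation toC := (real_complex R).

Lemma card_spectral_diag_lt_nth1 (A : 'M[C]_n) (s : seq R) :
  A \is normalmx -> sorted <=%R s ->
  char_poly A = \prod_(x <- s) ('X - (toC x)%:P) ->
  (#|[pred i | spectral_diag A 0 i < toC (nth 0 s 1)]%R| <= 1)%N.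
Proof.
move=> A_normal s_sorted charA.
have /permP spec_perm : perm_eq (map toC s) [seq spectral_diag A 0 i | i <- enum 'I_n].
  by apply: normal_char_poly_spectral_diag; rewrite ?big_map.
rewrite card_count_enum.
have -> : count [pred i | spectral_diag A 0 i < toC (nth 0 s 1)] (enum 'I_n) =
    count (fun z => z < toC (nth 0 s 1)) [seq spectral_diag A 0 i | i <- enum 'I_n].
  by rewrite [RHS]count_map.
rewrite -spec_perm count_map.
rewrite (eq_count (a2 := fun x => x < nth 0 s 1)) => [|x]; last by rewrite /= ltcR.
exact: sorted_count_lt_nth1.
Qed.

Lemma spectral_diag_ge_nth1_but_one (A : 'M[C]_n) (s : seq R) :
  (0 < n)%N -> A \is hermsymmx -> sorted <=%R s ->
  char_poly A = \prod_(x <- s) ('X - (toC x)%:P) ->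
  exists i0, forall i, i != i0 -> toC (nth 0 s 1) <= spectral_diag A 0 i.
Proof.
move=> n_gt0 A_herm s_sorted charA.
have below1 := card_spectral_diag_lt_nth1 (hermitian_normalmx A_herm) s_sorted charA.
set D := spectral_diag A; set mu := toC (nth 0 s 1).
have D_ge i : ~~ (D 0 i < mu) -> mu <= D 0 i.
  have D_real : D 0 i \is Num.real.
    exact: mxOverP (hermitian_spectral_diag_real A_herm) 0 i.
  have mu_real : mu \is Num.real by apply/complex_realP; exists (nth 0 s 1).
  by rewrite real_leNgt.
have [i0 i0_below | none_below] := pickP [pred i | D 0 i < mu]; last first.
  by exists (Ordinal n_gt0) => i _; rewrite D_ge // (negbT (none_below i)).
exists i0 => i i_neq; apply: D_ge; apply/negP => i_below.
have : (#|[set i0; i]| <= #|[pred i | D 0 i < mu]%R|)%N.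
  by apply/subset_leq_card/subsetP => j; rewrite !inE => /orP[] /eqP ->.
by rewrite cards2 eq_sym i_neq => /leq_trans /(_ below1).
Qed.

Lemma exists_rayleigh_ge_nth1 (A : 'M[C]_n) (s : seq R) (u v : 'rV[C]_n) :
  (0 < n)%N -> A \is hermsymmx -> sorted <=%R s ->
  char_poly A = \prod_(x <- s) ('X - (toC x)%:P) ->
  exists a b : C, ((a != 0) || (b != 0)) /\
    toC (nth 0 s 1) * ((a *: u + b *: v) *m (a *: u + b *: v)^t*) 0 0
      <= ((a *: u + b *: v) *m A *m (a *: u + b *: v)^t*) 0 0.
Proof.
move=> n_gt0 A_herm s_sorted charA.
have [i0 D_ge] := spectral_diag_ge_nth1_but_one n_gt0 A_herm s_sorted charA.
set P := spectralmx A; have PV : invmx P = P^t*.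
  by rewrite invmx_unitary ?spectral_unitarymx.
have A_PDP : A = P^t* *m diag_mx (spectral_diag A) *m P.
  by rewrite -PV; apply/orthomx_spectralP/hermitian_normalmx.
have unitP : P^t* *m P = 1%:M by rewrite -PV mulVmx ?spectral_unit.
(* [c w] is the coordinate of [w] on the eigenvector of the only eigenvalue
   that may lie below mu; killing it leaves only eigenvalues >= mu. *)
pose c (w : 'rV_n) := (w *m P^t*) 0 i0.
suff rayleigh_c0 a b : a * c u + b * c v = 0 ->
    toC (nth 0 s 1) * ((a *: u + b *: v) *m (a *: u + b *: v)^t*) 0 0
      <= ((a *: u + b *: v) *m A *m (a *: u + b *: v)^t*) 0 0.
  have [/andP[/eqP cu0 /eqP cv0] | c_neq0] := boolP ((c u == 0) && (c v == 0)).
    exists 1, 0; rewrite oner_eq0; split=> //.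
    by apply: rayleigh_c0; rewrite cu0 cv0 !mulr0 addr0.
  exists (c v), (- c u); split; first by rewrite oppr_eq0 orbC -negb_and.
  by apply: rayleigh_c0; rewrite mulrC mulNr addrN.
move=> c0; rewrite A_PDP; apply: rayleigh_unitary_diag unitP _ => i.
have [-> | /D_ge ->] := eqVneq i i0; last by rewrite orbT.
have c_lin : c (a *: u + b *: v) = a * c u + b * c v.
  by rewrite /c mulmxDl -!scalemxAl !mxE.
by rewrite -/(c _) c_lin c0 eqxx.
Qed.

Lemma rayleigh_ge_nth1_orth_kernel (A : 'M[C]_n) (s : seq R) (u v : 'rV[C]_n) :
  A \is hermsymmx -> (forall y : 'rV_n, 0 <= (y *m A *m y^t*) 0 0) ->
  sorted <=%R s -> char_poly A = \prod_(x <- s) ('X - (toC x)%:P) ->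
  u != 0 -> u *m A = 0 -> v *m u^t* = 0 ->
  toC (nth 0 s 1) * (v *m v^t*) 0 0 <= (v *m A *m v^t*) 0 0.
Proof.
move=> A_herm A_psd s_sorted charA u_neq0 uA0 vu0.
have [mu_le0 | mu_gt0] := lerP (nth 0 s 1) 0.
  apply: le_trans (A_psd v); apply: mulr_le0_ge0; last by rewrite -(dotmxE v) dnorm_ge0.
  by rewrite -(rmorph0 toC) lecR.
have n_gt0 : (0 < n)%N.
  rewrite lt0n; apply: contraNneq u_neq0 => n0; apply/eqP/rowP => i.
  by move: (ltn_ord i); rewrite [X in (_ < X)%N]n0.
have [a [b [ab_neq0]]] := exists_rayleigh_ge_nth1 u v n_gt0 A_herm s_sorted charA.
rewrite dot_comb_orth // quad_comb_kernel // => mu_le.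
have {}mu_gt0 : 0 < toC (nth 0 s 1) by rewrite -(rmorph0 toC) ltcR.
have [b0 | b_neq0] := eqVneq b 0.
  have u_gt0 : 0 < (u *m u^t*) 0 0 by rewrite -(dotmxE u) dnorm_gt0.
  move: ab_neq0 mu_le; rewrite b0 eqxx orbF !mul0r addr0 => a_neq0.
  by rewrite pmulr_rle0 // pmulr_rle0 ?mul_conjC_gt0 // (lt_geF u_gt0).
have bb_gt0 : 0 < b * b^* by rewrite mul_conjC_gt0.
rewrite -(ler_pM2l bb_gt0) mulrCA; apply: le_trans mu_le.
by rewrite ler_pM2l // lerDr mulr_ge0 ?mul_conjC_ge0 // -(dotmxE u) dnorm_ge0.
Qed.

End SpectralReal.

Section Laplacian.
Variables (C : numClosedFieldType) (n : nat) (e : rel 'I_n).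
Hypotheses (e_sym : symmetric e) (e_irr : irreflexive e).

Lemma laplacianE i j :
  laplacian C e i j = (i == j)%:R * (deg e i)%:R - (e i j)%:R.
Proof.
rewrite mxE; case: eqP => [->|_] /=; first by rewrite e_irr mul1r subr0.
by case: (e i j); rewrite /= mul0r ?sub0r ?oppr0.
Qed.

Lemma laplacian_hermsym : laplacian C e \is hermsymmx.
Proof.
apply: realsym_hermsym.
  apply/is_hermitianmxP; rewrite expr0 scale1r; apply/matrixP => i j.
  by rewrite !mxE eq_sym (e_sym j i); case: eqP => [->|].
apply/mxOverP => i j; rewrite mxE.
by case: eqP => _; rewrite ?realn //; case: (e i j); rewrite ?realN ?real0 ?real1.
Qed.

Lemma const1_mul_laplacian : (const_mx 1 : 'rV[C]_n) *m laplacian C e = 0.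
Proof.
apply/rowP => j; rewrite !mxE; under eq_bigr => i _ do rewrite mxE mul1r laplacianE.
rewrite sumrB (bigD1 j) //= big1 => [|i /negPf ij]; last by rewrite ij mul0r.
rewrite eqxx mul1r addr0 /deg -sumr_bool_card; apply/eqP; rewrite subr_eq0.
by apply/eqP/eq_bigr => i _; rewrite e_sym.
Qed.

Lemma laplacian_quad_form (y : 'rV[C]_n) :
  (y *m laplacian C e *m y^t*) 0 0 *+ 2 =
  \sum_i \sum_j (e i j)%:R * ((y 0 i - y 0 j) * (y 0 i - y 0 j)^*).
Proof.
pose w i j := (e i j)%:R * (y 0 i * (y 0 i)^* - y 0 i * (y 0 j)^*).
have quad_w : (y *m laplacian C e *m y^t*) 0 0 = \sum_i \sum_j w i j.
  rewrite mxE; under eq_bigr => j _ do rewrite !mxE mulr_suml.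
  rewrite exchange_big /=; apply: eq_bigr => i _.
  under eq_bigr => j _ do rewrite laplacianE mulrBr mulrBl.
  rewrite sumrB (bigD1 i) //= big1 => [|j /negPf ij]; last first.
    by rewrite eq_sym ij mul0r mulr0 mul0r.
  rewrite eqxx mul1r addr0 /deg -sumr_bool_card mulr_sumr mulr_suml -sumrB.
  by apply: eq_bigr => j _; rewrite /w mulrBr !mulrA ![(e i j)%:R * y 0 i]mulrC.
have w_sym i j :
    (e i j)%:R * ((y 0 i - y 0 j) * (y 0 i - y 0 j)^*) = w i j + w j i.
  rewrite /w (e_sym j i) -mulrDr rmorphB /=; congr (_ * _).
  by rewrite mulrBl !mulrBr [y 0 j * (y 0 i)^*]mulrC opprB.
under eq_bigr => i _ do under eq_bigr => j _ do rewrite w_sym.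
rewrite quad_w mulr2n; under eq_bigr => i _ do rewrite big_split /=.
by rewrite big_split /= [X in _ + X = _]exchange_big.
Qed.

Lemma laplacian_psd (y : 'rV[C]_n) : 0 <= (y *m laplacian C e *m y^t*) 0 0.
Proof.
rewrite -(pmulrn_lge0 _ (isT : (0 < 2)%N)) laplacian_quad_form.
apply: sumr_ge0 => i _; apply: sumr_ge0 => j _.
by rewrite mulr_ge0 ?ler0n ?mul_conjC_ge0.
Qed.

End Laplacian.

Section AlgebraicConnectivity.
Variables (R : realType) (n : nat) (e : rel 'I_n).
Hypotheses (e_sym : symmetric e) (e_irr : irreflexive e).
Local Notation C := R[i].
Local Notation toC := (real_complex R).

Lemma conjC_real_complex (r : R) : (toC r)^* = toC r.
Proof. exact: conjc_real. Qed.

Lemma laplacian_complex : laplacian C e = map_mx toC (laplacian R e).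
Proof.
apply/matrixP => i j; rewrite !mxE.
by case: eqP => _; rewrite ?rmorph_nat //; case: (e i j); rewrite ?rmorphN1 ?rmorph0.
Qed.

Lemma char_poly_laplacian_complex (s : seq R) :
  char_poly (laplacian R e) = \prod_(x <- s) ('X - x%:P) ->
  char_poly (laplacian C e) = \prod_(x <- s) ('X - (toC x)%:P).
Proof.
by move=> charR; rewrite laplacian_complex -map_char_poly charR map_prod_XsubC.
Qed.

Lemma algebraic_connectivity_ge0 (mu : R) : algebraic_connectivity e mu -> 0 <= mu.
Proof.
move=> [s [_ s_sorted charR ->]].
have [s_gt1 | s_le1] := ltnP 1 (size s); last by rewrite nth_default.
rewrite -ler0c; apply: psd_eigenvalue_ge0 (laplacian_psd e_sym e_irr) _.
rewrite eigenvalue_root_char (char_poly_laplacian_complex charR).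
by rewrite -(big_map toC xpredT (fun z => 'X - z%:P)) root_prod_XsubC map_f ?mem_nth.
Qed.

Lemma algebraic_connectivity_rayleigh (mu : R) (x : 'I_n -> R) :
  (0 < n)%N -> algebraic_connectivity e mu -> \sum_i x i = 0 ->
  mu * (\sum_i x i ^+ 2) *+ 2 <= \sum_i \sum_j (e i j)%:R * (x i - x j) ^+ 2.
Proof.
move=> n_gt0 [s [_ s_sorted charR ->]] x_sum0.
pose one : 'rV[C]_n := const_mx 1; pose xC : 'rV[C]_n := \row_i toC (x i).
have one_neq0 : one != 0.
  by apply/eqP => /rowP /(_ (Ordinal n_gt0)) /eqP; rewrite !mxE oner_eq0.
have xC_orth : xC *m one^t* = 0.
  apply/rowP => i; rewrite ord1 !mxE; under eq_bigr => j _ do rewrite !mxE conjC1 mulr1.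
  by rewrite -rmorph_sum x_sum0 rmorph0.
have norm_xC : (xC *m xC^t*) 0 0 = toC (\sum_i x i ^+ 2).
  rewrite mxE rmorph_sum; apply: eq_bigr => i _.
  by rewrite !mxE conjC_real_complex -rmorphM expr2.
have quad_xC : (xC *m laplacian C e *m xC^t*) 0 0 *+ 2 =
    toC (\sum_i \sum_j (e i j)%:R * (x i - x j) ^+ 2).
  rewrite laplacian_quad_form // rmorph_sum; apply: eq_bigr => i _.
  rewrite rmorph_sum; apply: eq_bigr => j _.
  by rewrite !mxE -rmorphB conjC_real_complex rmorphM rmorph_nat rmorphXn expr2.
have := rayleigh_ge_nth1_orth_kernel (laplacian_hermsym C e_sym)
  (laplacian_psd e_sym e_irr) s_sorted (char_poly_laplacian_complex charR)
  one_neq0 (const1_mul_laplacian C e_sym e_irr) xC_orth.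
rewrite norm_xC -rmorphM => mu_le.
by rewrite -lecR rmorphMn -quad_xC lerMn2r orFb.
Qed.

End AlgebraicConnectivity.

Section Cycles.
Local Open Scope nat_scope.
Variables (n : nat) (e : rel 'I_n).
Hypotheses (e_sym : symmetric e) (e_irr : irreflexive e).

Lemma exists_cycle : 0 < n -> (forall x, 1 < deg e x) ->
  exists c : seq 'I_n, [/\ uniq c, cycle e c & 3 <= size c].
Proof.
move=> n_gt0 deg_gt1.
pose has_path k := [exists t : k.+1.-tuple 'I_n, uniq t && sorted e t].
have has_path0 : exists k, has_path k.
  by exists 0; apply/existsP; exists [tuple (Ordinal n_gt0)].
have has_path_le k : has_path k -> k <= n.
  move=> /existsP[t /andP[t_uniq _]].
  have := max_card (mem t).
  by rewrite card_ord (card_uniqP t_uniq) size_tuple => /ltnW.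
case: (ex_maxnP has_path0 has_path_le) => k /existsP[t /andP[t_uniq t_path]] k_max.
case def_t : (val t) t_uniq t_path (size_tuple t) => [|x p] //=.
move=> /andP[x_notin_p p_uniq] x_p _.
have nbrs_in_p y : e x y -> y \in p.
  move=> xy; apply/negPn/negP => y_notin_p.
  suff /k_max : has_path k.+1 by rewrite ltnn.
  apply/existsP; exists (cons_tuple y t); rewrite /= def_t /= x_p e_sym xy.
  rewrite inE negb_or y_notin_p x_notin_p p_uniq !andbT.
  by apply/negP => /eqP yx; move: xy; rewrite yx e_irr.
have [w xw w_neq] : exists2 w, e x w & w != head x p.
  apply/exists_inP; apply: contraLR (deg_gt1 x); rewrite negb_exists_in -leqNgt.
  move=> /forall_inP no_other; rewrite -(cards1 (head x p)) /deg.
  by apply/subset_leq_card/subsetP => y; rewrite !inE => /no_other /negbNE.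
have w_p := nbrs_in_p w xw; set i := index w p.
have i_gt0 : 0 < i.
  rewrite lt0n; apply: contra w_neq => /eqP i0.
  by rewrite -(nth_index x w_p) -/i i0 nth0.
exists (x :: take i.+1 p); split.
- by rewrite /= take_uniq // andbT; apply: contra x_notin_p => /mem_take.
- rewrite /= rcons_path take_path //= e_sym.
  by rewrite -nth_last size_takel ?index_mem //= nth_take // nth_index.
- by rewrite /= size_takel ?index_mem.
Qed.

Lemma girth_spec : (exists c : seq 'I_n, [/\ uniq c, cycle e c & 3 <= size c]) ->
  exists t : seq 'I_n,
    [/\ uniq t, cycle e t, size t = girth e, 3 <= girth e & girth e <= n].
Proof.
case=> c [c_uniq c_cycle c_ge3].
have c_le_n : size c <= n.
  by have := max_card (mem c); rewrite card_ord (card_uniqP c_uniq).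
have : size c \in [seq k <- iota 0 n.+1 | has_cycle_of_length e k].
  rewrite mem_filter mem_iota add0n ltnS c_le_n /has_cycle_of_length c_ge3 /= andbT.
  by apply/existsP; exists (in_tuple c); rewrite c_uniq c_cycle.
have has_cycle_lengths k : k \in [seq k <- iota 0 n.+1 | has_cycle_of_length e k] ->
    has_cycle_of_length e k && (k <= n) by rewrite mem_filter mem_iota ltnS.
rewrite /girth; move: has_cycle_lengths; case: [seq k <- _ | _] => // g lengths.
move=> /(_ g (mem_head _ _)) /andP[/andP[g_ge3 /existsP[t /andP[t_uniq t_cycle]]]].
by move=> g_le_n _; exists t; rewrite size_tuple.
Qed.

Lemma cycle_neighbours (t : seq 'I_n) (v : 'I_n) :
  uniq t -> cycle e t -> 3 <= size t -> v \in t ->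
  2 <= #|[set y | e v y & y \in t]|.
Proof.
move=> t_uniq t_cycle t_ge3 /rot_to[i q t_rot].
have vq_uniq : uniq (v :: q) by rewrite -t_rot rot_uniq.
have vq_cycle : cycle e (v :: q) by rewrite -t_rot rot_cycle.
have vq_size : size (v :: q) = size t by rewrite -t_rot size_rot.
have mem_vq y : (y \in v :: q) = (y \in t) by rewrite -t_rot mem_rot.
clear t_rot.
case: q vq_uniq vq_cycle vq_size mem_vq => [|a [|b r]] + + vq_size;
  try by rewrite -vq_size in t_ge3.
move=> vabr_uniq /= /andP[va]; rewrite rcons_path => /and3P[_ _ lv] mem_vabr.
set l := last b r in lv; have l_in : l \in b :: r by exact: mem_last.
have a_neq_l : a != l.
  by apply: contraTneq vabr_uniq => ->; rewrite /= l_in !andbF.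
have : #|[set a; l]| <= #|[set y | e v y & y \in t]|.
  apply/subset_leq_card/subsetP => y; rewrite !inE -!mem_vabr !inE.
  case/orP => /eqP ->; first by rewrite va eqxx orbT.
  by rewrite e_sym lv; move: l_in; rewrite inE => /orP[->|->]; rewrite !orbT.
by rewrite cards2 a_neq_l.
Qed.

End Cycles.

Lemma cycle_indicator_cut_le (R : realDomainType) (n : nat) (e : rel 'I_n) (d : nat)
    (t : seq 'I_n) :
  symmetric e -> regular e d -> uniq t -> cycle e t -> (3 <= size t)%N ->
  \sum_i \sum_j (e i j)%:R * ((i \in t)%:R - (j \in t)%:R) ^+ 2
    <= 2 * ((size t)%:R * (d%:R - 2)) :> R.
Proof.
move=> e_sym e_reg t_uniq t_cycle t_ge3.
pose chi i : R := (i \in t)%:R; rewrite -/chi.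
have chi_idem i : chi i * chi i = chi i by rewrite -natrM mulnb andbb.
have sq_diff i j : (chi i - chi j) ^+ 2 = chi i + chi j - 2 * (chi i * chi j).
  transitivity (chi i * chi i + chi j * chi j - 2 * (chi i * chi j)); first by ring.
  by rewrite !chi_idem.
have sum_chi : \sum_i chi i = (size t)%:R by exact: sumr_mem_uniq.
have deg_sum i : \sum_j ((e i j)%:R : R) = d%:R by rewrite sumr_bool_card -(e_reg i).
have sum_out : \sum_i \sum_j (e i j)%:R * chi i = (size t)%:R * d%:R.
  under eq_bigr => i _ do rewrite -mulr_suml deg_sum.
  by rewrite -mulr_sumr sum_chi mulrC.
have sum_in : \sum_i \sum_j (e i j)%:R * chi j = (size t)%:R * d%:R.
  rewrite exchange_big /= -sum_out; apply: eq_bigr => j _.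
  by apply: eq_bigr => i _; rewrite e_sym.
have sum_both : 2 * (size t)%:R <= \sum_i \sum_j (e i j)%:R * (chi i * chi j).
  rewrite -sum_chi mulr_sumr; apply: ler_sum => i _.
  under eq_bigr => j _ do rewrite mulrCA.
  rewrite -mulr_sumr /chi; case: (boolP (i \in t)) => [i_in | _].
    2: by rewrite !mul0r mulr0.
  under eq_bigr => j _ do rewrite -natrM mulnb.
  by rewrite sumr_bool_card mulr1 mul1r ler_nat cycle_neighbours.
have expand : \sum_i \sum_j (e i j)%:R * (chi i - chi j) ^+ 2 =
    \sum_i \sum_j (e i j)%:R * chi i + \sum_i \sum_j (e i j)%:R * chi j
      - 2 * \sum_i \sum_j (e i j)%:R * (chi i * chi j).
  rewrite -big_split mulr_sumr -sumrB; apply: eq_bigr => i _.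
  rewrite -big_split mulr_sumr -sumrB; apply: eq_bigr => j _ /=.
  by rewrite sq_diff; ring.
by rewrite expand sum_out sum_in; lra.
Qed.

Lemma algebraic_connectivity_cycle_le (R : realType) (n : nat) (e : rel 'I_n)
    (mu : R) (d : nat) (t : seq 'I_n) :
  symmetric e -> irreflexive e -> algebraic_connectivity e mu -> regular e d ->
  uniq t -> cycle e t -> (3 <= size t)%N ->
  mu * (n%:R - (size t)%:R) <= (d%:R - 2) * n%:R.
Proof.
move=> e_sym e_irr e_mu e_reg t_uniq t_cycle t_ge3; set g := size t.
have g_le_n : (g <= n)%N.
  by have := max_card (mem t); rewrite card_ord (card_uniqP t_uniq).
have n_gt0 : (0 < n)%N by lia.
pose chi i : R := (i \in t)%:R.
have chi_idem i : chi i * chi i = chi i by rewrite -natrM mulnb andbb.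
have sum_chi : \sum_i chi i = g%:R by exact: sumr_mem_uniq.
pose X i := n%:R * chi i - g%:R.
have X_sum0 : \sum_i X i = 0.
  by rewrite sumrB -mulr_sumr sum_chi sumr_const card_ord mulr_natl subrr.
have X_norm : \sum_i X i ^+ 2 = g%:R * n%:R * (n%:R - g%:R).
  have X_sq i : X i ^+ 2 = (n%:R ^+ 2 - 2 * n%:R * g%:R) * chi i + g%:R ^+ 2.
    transitivity (n%:R ^+ 2 * (chi i * chi i) - 2 * n%:R * g%:R * chi i + g%:R ^+ 2).
      by rewrite /X; ring.
    by rewrite chi_idem; ring.
  under eq_bigr => i _ do rewrite X_sq.
  by rewrite big_split /= -mulr_sumr sum_chi sumr_const card_ord -mulr_natr; ring.
have X_cut : \sum_i \sum_j (e i j)%:R * (X i - X j) ^+ 2 =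
    n%:R ^+ 2 * \sum_i \sum_j (e i j)%:R * (chi i - chi j) ^+ 2.
  rewrite mulr_sumr; apply: eq_bigr => i _; rewrite mulr_sumr; apply: eq_bigr => j _.
  by rewrite /X; ring.
have := algebraic_connectivity_rayleigh e_sym e_irr n_gt0 e_mu X_sum0.
rewrite X_norm X_cut mulr2n => rayleigh.
have cut := cycle_indicator_cut_le R e_sym e_reg t_uniq t_cycle t_ge3.
have {}cut := ler_wpM2l (sqr_ge0 (n%:R : R)) cut.
have gn_gt0 : 0 < 2 * ((g%:R : R) * n%:R) by rewrite !mulr_gt0 ?ltr0n //; lia.
rewrite -(ler_pM2r gn_gt0); lra.
Qed.

Lemma algebraic_connectivity_girth_le (R : realType) (n : nat) (e : rel 'I_n)
    (mu : R) (d : nat) :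
  symmetric e -> irreflexive e -> (0 < n)%N -> algebraic_connectivity e mu ->
  regular e d -> (2 <= d)%N ->
  [/\ (3 <= girth e)%N, (girth e <= n)%N &
      mu * (n%:R - (girth e)%:R) <= (d%:R - 2) * n%:R].
Proof.
move=> e_sym e_irr n_gt0 e_mu e_reg d_ge2.
have deg_gt1 x : (1 < deg e x)%N by rewrite e_reg.
have [t [t_uniq t_cycle <- t_ge3 t_le_n]] :=
  girth_spec (exists_cycle e_sym e_irr n_gt0 deg_gt1).
by split=> //; apply: algebraic_connectivity_cycle_le.
Qed.

Theorem theorem5 (R : realType) (n : nat) (e : rel 'I_n) (mu : R) :
  simple_graph e -> connected_graph e -> algebraic_connectivity e mu ->
  [/\ regular e 3 -> Num.ceil (n%:R * (mu - 1) / mu) <= (girth e)%:Z,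
      regular e 4 -> Num.ceil (n%:R * (mu - 2) / mu) <= (girth e)%:Z
    & regular e 5 -> Num.ceil (n%:R * mu / (n%:R + mu)) <= (girth e)%:Z].
Proof.
move=> [e_sym e_irr] _ e_mu; have mu_ge0 := algebraic_connectivity_ge0 e_sym e_irr e_mu.
have ceil_le_girth (x : R) : x <= (girth e)%:R -> Num.ceil x <= (girth e)%:Z.
  by rewrite ceil_le_int.
have [n0 | n_gt0] := posnP n.
  have -> : (n%:R : R) = 0 by rewrite n0.
  by split=> _; apply: ceil_le_girth; rewrite !mul0r ler0n.
split=> /(algebraic_connectivity_girth_le e_sym e_irr n_gt0 e_mu)/(_ isT).
all: rewrite -(ler_nat R 3) -(ler_nat R) => -[g_ge3 g_le_n mu_le]; apply: ceil_le_girth.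
- (* For mu = 0 the left-hand side is 0 since x / 0 = 0. *)
  have [-> | mu_neq0] := eqVneq mu 0; first by rewrite invr0 mulr0; lra.
  by rewrite ler_pdivrMr ?lt_def ?mu_neq0 //; lra.
- have [-> | mu_neq0] := eqVneq mu 0; first by rewrite invr0 mulr0; lra.
  by rewrite ler_pdivrMr ?lt_def ?mu_neq0 //; lra.
- by rewrite ler_pdivrMr; nra.
Qed.
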